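(* Let $1<p<\infty$, $p^*=p/(p-1)$, let $E,F,G$ be Banach spaces, $u\in\mathcal{L}(E;F)$ and $v\in\mathcal{L}(F;G)$. If the adjoint $u^*\colon F^*\to E^*$ is absolutely mid $p^*$-summing and the adjoint $v^*\colon G^*\to F^*$ is weakly mid $p^*$-summing, then $v\circ u$ is Cohen strongly $p$-summing.
   Context: For a Banach space $X$ and $1\le r\le\infty$: $\ell_r(X)$ absolutely $r$-summable sequences; $\ell_r^w(X)$ sequences with $\sup_{x^*\in B_{X^*}}\|(x^*(x_j))_j\|_r<\infty$; for $r<\infty$, $\ell_r^{mid}(X)$ the $(x_j)\in\ell_r^w(X)$ with $\sum_n\sum_j|x_n^*(x_j)|^r<\infty$ for every $(x_n^* )\in\ell_r^w(X^* )$; $\ell_p\langle X\rangle$ the $(x_j)$ with $\sup_{(x_j^* )\in B_{\ell_{p^*}^w(X^* )}}\sum_j|x_j^*(x_j)|<\infty$. A bounded linear $T\colon X\to Y$ is absolutely mid $r$-summing if $(T(x_j))\in\ell_r(Y)$ whenever $(x_j)\in\ell_r^{mid}(X)$; weakly mid $r$-summing if $(T(x_j))\in\ell_r^{mid}(Y)$ whenever $(x_j)\in\ell_r^w(X)$; Cohen strongly $p$-summing if $(T(x_j))\in\ell_p\langle Y\rangle$ whenever $(x_j)\in\ell_p(X)$. *)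

From HB Require Import structures.
From mathcomp Require Import all_boot all_order all_algebra.
From mathcomp Require Import all_classical all_reals all_analysis.
Set Implicit Arguments. Unset Strict Implicit. Unset Printing Implicit Defensive.
Import Order.TTheory GRing.Theory Num.Theory.
Import numFieldNormedType.Exports.
Local Open Scope classical_set_scope.
Local Open Scope ring_scope.

(* A (real) normed space presented concretely: a carrier, the set of its
   genuine elements, the vector operations and the norm.  This presentation
   is used so that duals, biduals and tridual can be iterated. *)
Record nspace (R : realType) := NSpace {
  nsT :> Type;
  nsE : set nsT;
  nsadd : nsT -> nsT -> nsT;
  nsscale : R -> nsT -> nsT;
  nsnorm : nsT -> R }.
Arguments nsE {R} n _.
Arguments nsadd {R} n _ _.
Arguments nsscale {R} n _ _.
Arguments nsnorm {R} n _.

Definition ns (R : realType) (X : completeNormedModType R) : nspace R :=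
  @NSpace R X setT (fun x y => x + y) (fun a x => a *: x) (fun x => `|x|).

Definition blin_functional (R : realType) (N : nspace R) (f : N -> R) : Prop :=
  [/\ (forall x y, nsE N x -> nsE N y -> f (nsadd N x y) = f x + f y),
      (forall a x, nsE N x -> f (nsscale N a x) = a * f x) &
      (exists C : R, forall x, nsE N x -> `|f x| <= C * nsnorm N x)].

Definition dual (R : realType) (N : nspace R) : nspace R :=
  @NSpace R (N -> R) (@blin_functional R N)
    (fun f g x => f x + g x) (fun a f x => a * f x)
    (fun f => sup [set `|f x| | x in [set x | nsE N x /\ nsnorm N x <= 1]]).

Definition dual_ball (R : realType) (N : nspace R) : set (N -> R) :=
  [set f | nsE (dual N) f /\ nsnorm (dual N) f <= 1].
Arguments dual_ball {R} N _.

Definition psum (R : realType) (r : R) (a : nat -> R) : \bar R :=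
  (\sum_(j <oo) (`|a j| `^ r)%:E)%E.

Definition seq_in (R : realType) (N : nspace R) (x : nat -> N) : Prop :=
  forall j, nsE N (x j).

Definition strong_seq (R : realType) (N : nspace R) (r : R) (x : nat -> N) :=
  seq_in x /\ (psum r (fun j => nsnorm N (x j)) < +oo)%E.

(* r-th power of the weak l_r norm:
   sup_{x^* in B_{N^*}} sum_j |x^*(x_j)|^r. *)
Definition weak_normr (R : realType) (N : nspace R) (r : R) (x : nat -> N)
  : \bar R := ereal_sup [set psum r (fun j => f (x j)) | f in dual_ball N].

Definition weak_seq (R : realType) (N : nspace R) (r : R) (x : nat -> N) :=
  seq_in x /\ (weak_normr r x < +oo)%E.

Definition mid_seq (R : realType) (N : nspace R) (r : R) (x : nat -> N) :=
  weak_seq r x /\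
  forall y : nat -> dual N, weak_seq r y ->
    (\sum_(n <oo) \sum_(j <oo) (`|y n (x j)| `^ r)%:E < +oo)%E.

Definition cohen_seq (R : realType) (N : nspace R) (p : R) (x : nat -> N) :=
  seq_in x /\
  (ereal_sup [set (\sum_(j <oo) (`|g j (x j)|)%:E)%E
     | g in [set g : nat -> dual N |
              seq_in g /\ (weak_normr (p / (p - 1)) g <= 1)%E]] < +oo)%E.

Definition abs_mid_summing (R : realType) (M N : nspace R) (T : M -> N) (r : R) :=
  forall x : nat -> M, mid_seq r x -> strong_seq r (T \o x).

Definition weak_mid_summing (R : realType) (M N : nspace R) (T : M -> N) (r : R) :=
  forall x : nat -> M, weak_seq r x -> mid_seq r (T \o x).

Definition cohen_summing (R : realType) (M N : nspace R) (T : M -> N) (p : R) :=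
  forall x : nat -> M, strong_seq p x -> cohen_seq p (T \o x).

Definition adjoint (R : realType) (E F : completeNormedModType R) (u : E -> F)
  : dual (ns F) -> dual (ns E) := fun f => f \o u.

From HB Require Import structures.
From mathcomp Require Import all_boot all_order all_algebra.
From mathcomp Require Import all_classical all_reals all_analysis.
From mathcomp Require Import lra ring.

(* Write q = p/(p-1) and X' for the dual of X.  For g in l_q^w(G'), the
   hypotheses put u'v'g in l_q(E'), so for x in l_p(E) Young's inequality gives
   sum_j |g_j(v u x_j)| <= sum_j ||u'v'g_j||^q + ||x_j||^p < oo.
   Finiteness for each g upgrades to a bound uniform over the unit ball of
   l_q^w(G') by a gliding hump: were the sums unbounded, one could pick
   consecutive blocks of indices and g^k in the ball whose sum over block k
   is at least (k+1) 2^(k+1); the sequence equal to 2^-(k+1) g^k on block k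
   is again in the ball (the weights sum to 1 and q >= 1), yet its sum
   diverges. *)

Set Implicit Arguments. Unset Strict Implicit. Unset Printing Implicit Defensive.
Import Order.TTheory GRing.Theory Num.Theory.
Import numFieldNormedType.Exports.
Local Open Scope classical_set_scope.
Local Open Scope ring_scope.

Lemma block_index (Ns : nat -> nat) : (forall k, Ns k < Ns k.+1)%N ->
  exists b : nat -> nat, forall k j, (Ns k <= j < Ns k.+1)%N -> b j = k.
Proof.
move=> NsS.
have Ns_le : {homo Ns : m n / (m <= n)%N} :=
  homo_leq leqnn leq_trans (fun i => ltnW (NsS i)).
have Ns_ge k : (k <= Ns k)%N by elim: k => // k IH; exact: leq_ltn_trans IH (NsS k).
have hex j : exists k, (j < Ns k.+1)%N by exists j; exact: leq_ltn_trans (Ns_ge j) (NsS j).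
exists (fun j => ex_minn (hex j)) => k j /andP[kj jk].
case: ex_minnP => m jm /(_ k jk) mk; apply/eqP; rewrite eqn_leq mk leqNgt.
by apply/negP => /Ns_le/(leq_trans jm); rewrite ltnNge kj.
Qed.

Section nneseries.
Variable R : realType.
Local Open Scope ereal_scope.

Lemma nneseries_ge_term (u : nat -> \bar R) j : (forall i, 0 <= u i) ->
  u j <= \sum_(i <oo) u i.
Proof.
by move=> u0; rewrite (@nneseriesD1 _ u j xpredT) // leeDl // nneseries_ge0.
Qed.

Lemma lt_nneseries_partial (u : nat -> \bar R) (a : \bar R) :
  (forall i, 0 <= u i) -> a < \sum_(i <oo) u i ->
  exists n, a < \sum_(0 <= i < n) u i.
Proof.
move=> u0.
have u_nd := ereal_nondecreasing_series (P := xpredT) (N := 0%N) (fun n _ _ => u0 n).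
rewrite (cvg_lim _ (ereal_nondecreasing_cvgn u_nd)) //.
by move=> /ereal_sup_gt[_ [n _ <-]]; exists n.
Qed.

End nneseries.

Section dual_norm.
Variables (R : realType) (X : completeNormedModType R).

Lemma le_dual_norm (f : X -> R) : nsE (dual (ns X)) f ->
  forall x : X, `|f x| <= nsnorm (dual (ns X)) f * `|x|.
Proof.
case=> _ fZ [C fC] x.
have f0 : f 0 = 0 by have := fZ 0 0 I; rewrite /= scale0r mul0r.
have [->|x0] := eqVneq x 0; first by rewrite f0 !normr0 mulr0.
have nx : 0 < `|x| by rewrite normr_gt0.
set y := `|x|^-1 *: x.
have fy : `|f y| <= nsnorm (dual (ns X)) f.
  apply: sup_upper_bound; last first.
    by exists y => //; split => //=; rewrite normrZ normfV normr_id mulVf ?gt_eqF.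
  split; first by exists `|f 0|, 0 => //; split => //=; rewrite normr0.
  exists `|C| => _ [z [_ z1] <-]; apply: le_trans (fC z I) _.
  by apply: le_trans (ler_norm _) _; rewrite normrM ler_piMr // normr_id.
move: fy; rewrite /y (fZ _ x I) normrM normfV normr_id.
by rewrite ler_pdivrMl // mulrC.
Qed.

Lemma eval_in_dual_ball (y : X) : `|y| <= 1 ->
  dual_ball (dual (ns X)) (fun f => f y).
Proof.
move=> y1; split.
  split => //; exists `|y| => f f_dual; rewrite mulrC; exact: (@le_dual_norm f).
have zero_dual : nsE (dual (ns X)) (fun _ => 0).
  split => //= [* | * |]; first by rewrite addr0.
    by rewrite mulr0.
  by exists 0 => *; rewrite normr0 mul0r.
have zero_norm : nsnorm (dual (ns X)) (fun _ => 0) <= 1.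
  apply: ge_sup; first by exists `|0 : R|, 0 => //; split => //=; rewrite normr0.
  by move=> _ [x _ <-]; rewrite normr0.
apply: ge_sup; first by exists `|0 : R|, (fun _ => 0).
move=> _ [f [f_dual f1] <-] /=.
have := @le_dual_norm f f_dual y; have := normr_ge0 y; nra.
Qed.

Lemma weak_ball_dual_norm_le1 (r : R) (g : nat -> dual (ns X)) :
  0 < r -> seq_in g -> (weak_normr r g <= 1)%E ->
  forall j, nsnorm (dual (ns X)) (g j) <= 1.
Proof.
move=> r0 g_dual g1 j.
apply: ge_sup; first by exists `|g j 0|, 0 => //; split => //=; rewrite normr0.
move=> _ [z [_ z1] <-].
have : ((`|g j z| `^ r)%:E <= 1)%E.
  apply: le_trans g1; apply: le_trans (ereal_sup_ubound _); last first.
    by exists (fun f => f z) => //; exact: eval_in_dual_ball.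
  rewrite /psum; apply: nneseries_ge_term => i.
  by rewrite lee_fin powR_ge0.
rewrite lee_fin => gjz_r; rewrite leNgt; apply/negP => gt1.
have : 1 `^ r < `|g j z| `^ r by apply: gt0_ltr_powR; rewrite ?nnegrE.
by rewrite powR1 ltNge gjz_r.
Qed.

End dual_norm.

Section conjugate_exponent.
Variables (R : realType) (p : R).
Hypothesis p_gt1 : 1 < p.

Lemma conjugate_exponent_ge1 : 1 <= p / (p - 1).
Proof. by rewrite ler_pdivlMr ?subr_gt0 // mul1r lerBlDr lerDl. Qed.

Lemma young_conjugate (a b : R) : 0 <= a -> 0 <= b ->
  a * b <= a `^ (p / (p - 1)) + b `^ p.
Proof.
move=> a0 b0; have p0 : 0 < p by apply: lt_trans p_gt1.
have q1 := conjugate_exponent_ge1; have q0 : 0 < p / (p - 1) by apply: lt_le_trans q1.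
have := @conjugate_powR R a b _ _ a0 b0 q0 p0.
have -> : (p / (p - 1))^-1 + p^-1 = 1 by rewrite invf_div; field; rewrite gt_eqF.
move=> /(_ erefl)/le_trans; apply; apply: lerD.
  by rewrite ler_pdivrMr // ler_peMr // powR_ge0.
by rewrite ler_pdivrMr // ler_peMr // ?powR_ge0 // ltW.
Qed.

Lemma strong_dual_pairing_summable (X : completeNormedModType R)
    (w : nat -> dual (ns X)) (x : nat -> ns X) :
  strong_seq (p / (p - 1)) w -> strong_seq p x ->
  (\sum_(j <oo) (`|w j (x j)|)%:E < +oo)%E.
Proof.
move=> [w_dual w_sum] [_ x_sum].
apply: (@le_lt_trans _ _
  (\sum_(j <oo) ((`|nsnorm (dual (ns X)) (w j)| `^ (p / (p - 1)))%:E
                 + (`|nsnorm (ns X) (x j)| `^ p)%:E))%E).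
  apply: lee_nneseries => [j _ _|j _]; first by rewrite lee_fin.
  rewrite -EFinD lee_fin; apply: le_trans (young_conjugate (normr_ge0 _) (normr_ge0 _)).
  apply: le_trans (le_dual_norm (w_dual j) (x j)) _.
  by apply: le_trans (ler_norm _) _; rewrite normrM.
by rewrite nneseriesD ?lte_add_pinfty // => j _; rewrite lee_fin powR_ge0.
Qed.

End conjugate_exponent.

Lemma blin_functionalZ (R : realType) (N : nspace R) (f : N -> R) (c : R) :
  blin_functional f -> blin_functional (fun z => c * f z).
Proof.
case=> fD fZ [C fC]; split.
- by move=> x y x_in y_in; rewrite fD // mulrDr.
- by move=> a x x_in; rewrite fZ // mulrCA.
- by exists (`|c| * C) => x x_in; rewrite normrM -mulrA ler_wpM2l // fC.
Qed.

Lemma powR_normrM_le (R : realType) (c a q : R) : 0 < c <= 1 -> 1 <= q ->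
  `|c * a| `^ q <= c * `|a| `^ q.
Proof.
move=> /andP[c0 c1] q1; rewrite normrM gtr0_norm // powRM ?(ltW c0) //.
by rewrite ler_wpM2r ?powR_ge0 // ge1r_powR // c0 c1.
Qed.

Definition dyadic_weight (R : realType) (k : nat) : R := 1 / (2 ^ k.+1)%:R.

Lemma dyadic_weight_gt0 (R : realType) k : 0 < dyadic_weight R k.
Proof. by rewrite divr_gt0 // ltr0n expn_gt0. Qed.

Lemma dyadic_weight_le1 (R : realType) k : dyadic_weight R k <= 1.
Proof. by rewrite ler_pdivrMr ?ltr0n ?expn_gt0 // mul1r ler1n expn_gt0. Qed.

Section gliding_hump.
Variables (R : realType) (G : completeNormedModType R) (q : R).
Hypothesis q_ge1 : 1 <= q.

Definition weak_unit_ball : set (nat -> dual (ns G)) :=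
  [set g | seq_in g /\ (weak_normr q g <= 1)%E].

Lemma weak_unit_ball_glue (gs : nat -> nat -> dual (ns G)) (b : nat -> nat) :
  (forall k, weak_unit_ball (gs k)) ->
  weak_unit_ball (fun j z => dyadic_weight R (b j) * gs (b j) j z).
Proof.
move=> gs_ball; split=> [j|]; first exact: blin_functionalZ ((gs_ball _).1 _).
apply: ge_ereal_sup => _ [phi phi_ball <-]; have [[_ phiZ _] _] := phi_ball.
set c := dyadic_weight R; pose t k j := (c k * `|phi (gs k j)| `^ q)%:E.
have t0 k j : (0 <= t k j)%E by rewrite lee_fin mulr_ge0 ?powR_ge0 // ltW ?dyadic_weight_gt0.
apply: (@le_trans _ _ (\sum_(j <oo) \sum_(k <oo) t k j)%E).
  apply: lee_nneseries => [j _ _|j _]; first by rewrite lee_fin powR_ge0.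
  apply: le_trans _ (nneseries_ge_term (b j) (t0^~ j)).
  rewrite (phiZ (c (b j)) _ ((gs_ball _).1 j)) lee_fin powR_normrM_le //.
  by rewrite dyadic_weight_gt0 dyadic_weight_le1.
rewrite nneseries_interchange //; apply: le_trans (epsilon_trick0 xpredT ler01).
apply: lee_nneseries => [k _ _|k _]; first exact: nneseries_ge0.
rewrite /t; under eq_eseriesr do rewrite EFinM.
rewrite nneseriesZl; last by move=> j _; rewrite lee_fin powR_ge0.
rewrite -[X in (_ <= X)%E]mule1 lee_wpmul2l ?lee_fin ?(ltW (dyadic_weight_gt0 _ _)) //.
by apply: le_trans (gs_ball k).2; apply: ereal_sup_ubound; exists phi.
Qed.

Lemma weak_unit_ball_le (g : nat -> dual (ns G)) : weak_unit_ball g ->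
  forall j (y : G), `|g j y| <= `|y|.
Proof.
move=> [g_dual g1] j y; apply: le_trans (le_dual_norm (g_dual j) y) _.
have q_gt0 : 0 < q by apply: lt_le_trans q_ge1.
by rewrite ler_piMl // (weak_ball_dual_norm_le1 q_gt0 g_dual g1).
Qed.

Definition cohen_norm (z : nat -> G) : \bar R :=
  ereal_sup [set (\sum_(j <oo) (`|g j (z j)|)%:E)%E | g in weak_unit_ball].

Lemma large_block (z : nat -> G) : cohen_norm z = +oo%E ->
  forall N (t : R), exists M g, [/\ (N < M)%N, weak_unit_ball g &
    t <= \sum_(N <= j < M) `|g j (z j)|].
Proof.
move=> z_inf N t; set head := \sum_(0 <= j < N) `|z j|.
have : ((head + t)%:E < cohen_norm z)%E by rewrite z_inf ltry.
move=> /ereal_sup_gt[_ [g g_ball <-] lt_sum].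
have [n] := lt_nneseries_partial (fun j => normr_ge0 (g j (z j)) : (0 <= _%:E)%E) lt_sum.
rewrite sumEFin lte_fin => lt_partial.
exists (maxn n N.+1), g; split; rewrite ?leq_max ?leqnn ?orbT //.
set f := fun j => `|g j (z j)|.
(* The head is bounded independently of g, since every g_j has norm at most 1. *)
have head_ge : \sum_(0 <= j < N) f j <= head.
  by apply: ler_sum => j _; exact: weak_unit_ball_le.
set M := maxn n N.+1.
have splitN : \sum_(0 <= j < M) f j = \sum_(0 <= j < N) f j + \sum_(N <= j < M) f j.
  by apply: big_cat_nat; rewrite // leq_max leqnSn orbT.
have splitn : \sum_(0 <= j < M) f j = \sum_(0 <= j < n) f j + \sum_(n <= j < M) f j.
  by apply: big_cat_nat; rewrite // leq_max leqnn.
have tail_ge0 : 0 <= \sum_(n <= j < M) f j by apply: sumr_ge0 => j _; exact: normr_ge0.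
change (t <= \sum_(N <= j < M) f j); lra.
Qed.

Lemma hump_blocks (z : nat -> G) : cohen_norm z = +oo%E ->
  exists (Ns : nat -> nat) (gs : nat -> nat -> dual (ns G)),
  [/\ forall k, (Ns k < Ns k.+1)%N, forall k, weak_unit_ball (gs k) &
      forall k, k.+1%:R <=
        dyadic_weight R k * \sum_(Ns k <= j < Ns k.+1) `|gs k j (z j)|].
Proof.
move=> /large_block large.
have /choice[next next_spec] : forall Nk : nat * nat,
    exists Mg : nat * (nat -> dual (ns G)), [/\ (Nk.1 < Mg.1)%N, weak_unit_ball Mg.2 &
      Nk.2.+1%:R / dyadic_weight R Nk.2 <= \sum_(Nk.1 <= j < Mg.1) `|Mg.2 j (z j)|].
  move=> [N k]; have [M [g Mg]] := large N (k.+1%:R / dyadic_weight R k).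
  by exists (M, g).
pose Ns := fix Ns k := if k is k'.+1 then (next (Ns k', k')).1 else 0%N.
exists Ns, (fun k => (next (Ns k, k)).2).
split=> k; have [? ? block] := next_spec (Ns k, k) => //.
by rewrite mulrC -ler_pdivrMr ?dyadic_weight_gt0.
Qed.

Lemma cohen_norm_lt_pinfty (z : nat -> G) :
  (forall g : nat -> dual (ns G),
     weak_seq q g -> (\sum_(j <oo) (`|g j (z j)|)%:E < +oo)%E) ->
  (cohen_norm z < +oo)%E.
Proof.
move=> summable; rewrite ltey; apply/eqP => /hump_blocks[Ns [gs [NsS gs_ball gs_big]]].
have [b b_block] := block_index NsS.
have h_ball := weak_unit_ball_glue b gs_ball.
have := summable _ (conj h_ball.1 (le_lt_trans h_ball.2 (ltry 1))).
apply/negP; rewrite -leNgt leye_eq; apply/eqP/eq_infty => r.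
set f := fun j => `|dyadic_weight R (b j) * gs (b j) j (z j)|.
have f0 j : (0 <= (f j)%:E)%E by rewrite lee_fin normr_ge0.
have [k r_lt] : exists k, r < k.+1%:R by exists (Num.truncn r); exact: truncnS_gt.
have block_f : \sum_(Ns k <= j < Ns k.+1) f j
    = dyadic_weight R k * \sum_(Ns k <= j < Ns k.+1) `|gs k j (z j)|.
  rewrite mulr_sumr; apply: eq_big_nat => j /b_block bj.
  by rewrite /f bj normrM gtr0_norm ?dyadic_weight_gt0.
have split_f : \sum_(0 <= j < Ns k.+1) f j
    = \sum_(0 <= j < Ns k) f j + \sum_(Ns k <= j < Ns k.+1) f j.
  by apply: big_cat_nat; rewrite // ltnW.
apply: le_trans (nneseries_lim_ge (Ns k.+1) (fun j _ _ => f0 j)).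
rewrite sumEFin lee_fin split_f block_f.
have : 0 <= \sum_(0 <= j < Ns k) f j by apply: sumr_ge0 => j _; exact: normr_ge0.
have := gs_big k; lra.
Qed.

End gliding_hump.

Theorem corollary2p11 (R : realType) (E F G : completeNormedModType R)
    (u : {linear E -> F}) (v : {linear F -> G}) (p : R) :
  1 < p -> continuous u -> continuous v ->
  abs_mid_summing (@adjoint R E F u) (p / (p - 1)) ->
  weak_mid_summing (@adjoint R F G v) (p / (p - 1)) ->
  cohen_summing (M := ns E) (N := ns G) (v \o u) p.
Proof.
move=> p_gt1 _ _ u_mid v_mid x x_strong; split=> //.
apply: (cohen_norm_lt_pinfty (conjugate_exponent_ge1 p_gt1)) => g g_weak.
exact: (strong_dual_pairing_summable p_gt1 (u_mid _ (v_mid _ g_weak)) x_strong).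
Qed.
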